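(* Let $G$ be a finite group in $\mathfrak{Y}_n$. Then $G$ is either soluble or simple.
   Context: $\mathfrak{Y}_n$ denotes the class of all groups $G$ such that $N_G(A)=A$ for every non-abelian subgroup $A\le G$. *)

From mathcomp Require Import all_boot all_fingroup all_solvable.
Set Implicit Arguments. Unset Strict Implicit. Unset Printing Implicit Defensive.
Local Open Scope group_scope.

Definition in_Yn (gT : finGroupType) (G : {group gT}) : Prop :=
  forall A : {group gT}, A \subset G -> ~~ abelian A -> 'N_G(A) = A.

From mathcomp Require Import all_boot all_fingroup all_solvable.
From mathcomp Require Import ssralg finmodule.
Set Implicit Arguments. Unset Strict Implicit. Unset Printing Implicit Defensive.
Import GRing.Theory.
Local Open Scope group_scope.

(* In a nonsolvable group of class Y_n every proper normal subgroup is abelian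
   (it cannot be self-normalising), so G is perfect. The tool is transfer: an
   abelian Sylow subgroup that is self-normalising in a perfect group is trivial
   (Burnside). The Y_n condition turns suitable subgroups of G / 'C_G(N) and of
   G / 'Z(G) into such Sylow subgroups, which shows that every abelian normal
   subgroup N is central and that 'Z(G) = 1; hence G is simple. *)

Section TransferFusion.

Variables (gT aT : finGroupType) (G H : {group gT}) (f : {morphism H >-> aT}).
Hypotheses (sHG : H \subset G) (abfH : abelian (f @* H)).

Lemma transfer_der1 g : g \in G^`(1) -> transfer G abfH g = 0%R.
Proof.
move=> G'g; pose V := transfer_morphism G abfH.
have abVG : abelian (V @* G) by apply/centsP=> u _ v _; apply: addrC.
have : V g \in (V @* G)^`(1).
  by rewrite -morphim_der // mem_morphim ?(subsetP (der_sub 1 G)).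
by rewrite (derG1P abVG) => /set1P.
Qed.

(* The transfer of [g] is 0, while its cycle expansion collapses to
   [f g ^+ #|G : H|] under the fusion hypothesis. *)
Lemma transfer_trivial_fusion g :
  g \in H -> g \in G^`(1) ->
  (forall x k, x \in G -> (g ^+ k) ^ x \in H -> f ((g ^+ k) ^ x) = f (g ^+ k)) ->
  f g ^+ #|G : H| = 1.
Proof.
move=> Hg G'g fus; have Gg := subsetP sHG g Hg.
have trX := transversalP (rcosets_cycle_partition sHG Gg).
have := transfer_cycle_expansion sHG abfH Gg trX.
rewrite transfer_der1 //; have := sum_index_rcosets_cycle sHG Gg trX.
set X := transversal _ _; pose n x := #|<[g]> : H :* x|.
rewrite -/(\sum_(x in X) n x)%N => sum_n.
rewrite (eq_bigr (fun x => FiniteModule.fmod abfH (f g) *+ n x)%R); last first.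
  move=> x Xx /=; have Gx := subsetP (transversal_sub trX) x Xx.
  have Hgx : (g ^+ n x) ^ x^-1 \in H.
    by have := mulg_exp_card_rcosets H g x; rewrite conjgE invgK mulgA -mem_rcoset.
  change (FiniteModule.fmod abfH (f ((g ^+ n x) ^ x^-1))
          = FiniteModule.fmod abfH (f g) *+ n x)%R.
  by rewrite fus ?groupV // morphX // FiniteModule.fmodX ?mem_morphim.
rewrite sumrMnr sum_n -FiniteModule.fmodX ?mem_morphim //.
move/(congr1 (@FiniteModule.fmval _ _ abfH)).
by rewrite FiniteModule.fmodK ?groupX ?mem_morphim.
Qed.

End TransferFusion.

Section AbelianSylow.

Variables (gT : finGroupType) (p : nat) (Q P : {group gT}).
Hypotheses (sylP : p.-Sylow(Q) P) (abP : abelian P).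

(* Burnside: [P] and [P :^ x] are both Sylow subgroups of 'C_Q[h ^ x]. *)
Lemma abelian_Sylow_fusion h x :
  h \in P -> x \in Q -> h ^ x \in P -> exists2 n, n \in 'N_Q(P) & h ^ x = h ^ n.
Proof.
move=> Ph Qx Phx; have sPQ := pHall_sub sylP.
have sCQ : 'C_Q[h ^ x] \subset Q := subsetIl _ _.
have sylP_C : p.-Sylow('C_Q[h ^ x]) P.
  by apply: pHall_subl sylP; rewrite // subsetI sPQ sub_cent1 (subsetP abP).
have sylPx_C : p.-Sylow('C_Q[h ^ x]) (P :^ x).
  apply: pHall_subl sCQ _; last by rewrite pHallJ.
  rewrite subsetI -{1}(conjGid Qx) conjSg sPQ /= cent1J conjSg sub_cent1.
  exact: (subsetP abP).
have [c /setIP[Qc /cent1P chx] defPx] := Sylow_trans sylP_C sylPx_C.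
exists (x * c^-1).
  rewrite inE groupM ?groupV //=; apply/normP.
  by rewrite conjsgM defPx -conjsgM mulgV conjsg1.
by rewrite conjgM; apply/esym/conjg_fixP/commgP/commuteV/commute_sym.
Qed.

Hypothesis nPP : 'N_Q(P) \subset P.

Lemma selfnorm_abelian_Sylow_conj_fixed h x :
  h \in P -> x \in Q -> h ^ x \in P -> h ^ x = h.
Proof.
move=> Ph Qx Phx; have [n /(subsetP nPP) Pn ->] := abelian_Sylow_fusion Ph Qx Phx.
by rewrite /conjg (centsP abP _ Ph _ Pn) mulKg.
Qed.

(* Weak form of Burnside's normal p-complement theorem: by transfer, [g] in
   P :&: Q' satisfies g ^+ #|Q : P| = 1, and #|Q : P| is prime to #[g]. *)
Lemma selfnorm_abelian_Sylow_TI_der1 : P :&: Q^`(1) = 1.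
Proof.
have sPQ := pHall_sub sylP.
apply/trivgP/subsetP=> g /setIP[Pg Q'g]; apply/set1P.
have abidP : abelian (idm P @* P) by rewrite morphim_idm.
have fus x k :
    x \in Q -> (g ^+ k) ^ x \in P -> idm P ((g ^+ k) ^ x) = idm P (g ^+ k).
  by move=> Qx Pgkx; rewrite /= selfnorm_abelian_Sylow_conj_fixed ?groupX.
have /eqP := transfer_trivial_fusion sPQ abidP Pg Q'g fus.
rewrite /= -order_dvdn => g_dvd_index.
have coPQ : coprime #|P| #|Q : P| by case/andP: (pHall_Hall sylP).
have /eqP := coprime_dvdr g_dvd_index (coprime_dvdl (order_dvdG Pg) coPQ).
by rewrite /coprime gcdnn => /eqP; rewrite order_eq1 => /eqP.
Qed.

End AbelianSylow.

Lemma perfect_selfnorm_abelian_Sylow_trivial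
    (gT : finGroupType) p (Q P : {group gT}) :
  p.-Sylow(Q) P -> abelian P -> 'N_Q(P) \subset P -> Q \subset Q^`(1) -> P :=: 1.
Proof.
move=> sylP abP nPP sQQ'; rewrite -(selfnorm_abelian_Sylow_TI_der1 sylP abP nPP).
by rewrite (setIidPl (subset_trans (pHall_sub sylP) sQQ')).
Qed.

(* Transfer into S / S', where central elements have no nontrivial fusion. *)
Lemma central_der1_mem_Sylow_der1 (gT : finGroupType) p (G S : {group gT}) z :
  p.-Sylow(G) S -> z \in S -> z \in 'C(G) -> z \in G^`(1) -> p.-elt z ->
  z \in S^`(1).
Proof.
move=> sylS Sz cGz G'z pz; have sSG := pHall_sub sylS.
pose f := restrm (der_norm 1 S) (coset S^`(1)).
have abfS : abelian (f @* S) by rewrite morphim_restrm setIid der_abelian.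
have fus x k : x \in G -> (z ^+ k) ^ x \in S -> f ((z ^+ k) ^ x) = f (z ^+ k).
  by move=> Gx _; rewrite /conjg (centP (groupX k cGz) x Gx) mulKg.
have := transfer_trivial_fusion sSG abfS Sz G'z fus.
rewrite /f /= -morphX // => /coset_idr; rewrite groupX ?(subsetP (der_norm 1 S)) //.
move=> /(_ isT) S'zn; have coz : coprime #[z] #|G : S|.
  by case/and3P: sylS => _ _; apply: pnat_coprime.
by rewrite -(expgK coz (cycle_id z)) groupX.
Qed.

Lemma abelian_joing_meet_cent (gT : finGroupType) (X Y : {group gT}) :
  abelian X -> abelian Y -> X :&: Y \subset 'C(X <*> Y).
Proof.
move=> abX abY; rewrite centY subsetI.
by rewrite (subset_trans (subsetIl _ _) abX) (subset_trans (subsetIr _ _) abY).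
Qed.

Section ProperAbelianPgroup.

Variables (gT : finGroupType) (p : nat) (S : {group gT}).
Hypotheses (pS : p.-group S) (nabS : ~~ abelian S).
Hypothesis properS_abelian : forall B : {group gT}, B \proper S -> abelian B.

Lemma proper_abelian_joing_cycles x y :
  x \in S -> y \in S -> y \notin 'C[x] -> <[x]> <*> <[y]> = S.
Proof.
move=> Sx Sy nCxy; have sXYS : <[x]> <*> <[y]> \subset S.
  by rewrite join_subG !cycle_subG Sx.
have [// | /properS_abelian] := eqVproper sXYS.
rewrite abelianY !cycle_abelian /= cycle_subG => Cxy.
by case/negP: nCxy; rewrite -cent_cycle.
Qed.

Lemma proper_abelian_noncommuting_pair :
  exists x, exists2 y, [/\ x \in S & y \in S] & y \notin 'C[x].
Proof.
have [x Sx nCSx] := subsetPn nabS.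
have [y Sy nCxy] : exists2 y, y \in S & y \notin 'C[x].
  by apply/subsetPn; rewrite sub_cent1.
by exists x, y.
Qed.

(* Maximal subgroups through non-commuting [x] and [y] generate [S] and are
   abelian, so the Frattini subgroup, lying in both, is central. *)
Lemma proper_abelian_Phi_cent : 'Phi(S) \subset 'C(S).
Proof.
have [x [y [Sx Sy] nCxy]] := proper_abelian_noncommuting_pair.
have properS_cycle z : z \in S -> <[z]> \proper S.
  move=> Sz; rewrite properEneq cycle_subG Sz andbT.
  by apply: contraNneq nabS => <-; apply: cycle_abelian.
pose properS := fun H : {group gT} => H \proper S.
have [X maxX sxX] := @maxgroup_exists _ properS _ (properS_cycle x Sx).
have [Y maxY syY] := @maxgroup_exists _ properS _ (properS_cycle y Sy).
have [prX prY] : X \proper S /\ Y \proper S.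
  by split; [apply: maxgroupp maxX | apply: maxgroupp maxY].
have defS : X <*> Y = S.
  apply/eqP; rewrite eqEsubset join_subG (proper_sub prX) (proper_sub prY) /=.
  rewrite -{1}(proper_abelian_joing_cycles Sx Sy nCxy) join_subG.
  by rewrite (subset_trans sxX (joing_subl _ _)) (subset_trans syY (joing_subr _ _)).
have := abelian_joing_meet_cent (properS_abelian prX) (properS_abelian prY).
rewrite defS; apply: subset_trans.
by rewrite subsetI (Phi_sub_max maxX) (Phi_sub_max maxY).
Qed.

Lemma proper_abelian_pgroup_der1_dvdp : #|S^`(1)| %| p.
Proof.
have [x [y [Sx Sy] nCxy]] := proper_abelian_noncommuting_pair.
have defS := proper_abelian_joing_cycles Sx Sy nCxy.
have [sS'Phi sMhoPhi] : S^`(1) \subset 'Phi(S) /\ 'Mho^1(S) \subset 'Phi(S).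
  by rewrite (Phi_joing pS) joing_subl joing_subr.
have cSc : [~ x, y] \in 'C(S).
  exact: subsetP (subset_trans sS'Phi proper_abelian_Phi_cent) _ (mem_commg Sx Sy).
have cSxp : x ^+ p \in 'C(S).
  apply: subsetP (subset_trans sMhoPhi proper_abelian_Phi_cent) _ _.
  by rewrite -[p]expn1 Mho_p_elt ?(mem_p_elt pS).
have := @der1_joing_cycles _ x y; rewrite /= defS => /(_ cSc) ->.
rewrite -orderE order_dvdn -commXg; last by apply/esym/(centP cSc).
by apply/commgP; apply: (centP cSxp).
Qed.

End ProperAbelianPgroup.

Lemma nilpotent_selfnorm_eq (gT : finGroupType) (G P B : {group gT}) :
  nilpotent P -> B \subset P -> P \subset G -> 'N_G(B) \subset B -> B :=: P.
Proof.
move=> nilP sBP sPG nBB; have [// | prBP] := eqVproper sBP.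
have := nilpotent_proper_norm nilP prBP; rewrite properE => /andP[_]; case/negP.
by apply: subset_trans nBB; rewrite setSI.
Qed.

Lemma quotient_selfnorm (gT : finGroupType) (G A M : {group gT}) :
  M <| G -> M \subset A -> A \subset G -> 'N_G(A) \subset A ->
  'N_(G / M)(A / M) \subset A / M.
Proof.
move=> nsMG sMA sAG nAA; have nsMA : M <| A := normalS sMA sAG nsMG.
apply/subsetP=> _ /setIP[/morphimP[u Nu Gu ->] nAu].
have /(subsetP (morphpre_norm _ _)) : u \in coset M @*^-1 'N(A / M).
  by apply/morphpreP.
by rewrite quotientGK // => nAu'; rewrite mem_quotient // (subsetP nAA) // inE Gu.
Qed.

Lemma quotient_perfect (gT : finGroupType) (G M : {group gT}) :
  M <| G -> G \subset G^`(1) -> G / M \subset (G / M)^`(1).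
Proof. by move=> nsMG sGG'; rewrite -quotient_der ?normal_norm ?quotientS. Qed.

Section ClassYn.

Variables (gT : finGroupType) (G : {group gT}).
Hypothesis YG : in_Yn G.

Lemma Yn_proper_normal_abelian (K : {group gT}) :
  K <| G -> K \proper G -> abelian K.
Proof.
move=> nsKG /properP[_ [x Gx notKx]]; apply/negP=> /negP nabK.
have := YG (normal_sub nsKG) nabK; rewrite (setIidPl (normal_norm nsKG)) => defG.
by rewrite -defG Gx in notKx.
Qed.

Lemma Yn_nilpotent_proper_abelian (P B : {group gT}) :
  P \subset G -> nilpotent P -> B \proper P -> abelian B.
Proof.
move=> sPG nilP prBP; apply/negP=> /negP nabB.
have sBG := subset_trans (proper_sub prBP) sPG.
have := nilpotent_selfnorm_eq nilP (proper_sub prBP) sPG.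
by rewrite YG // subxx => /(_ isT) defB; rewrite defB properxx in prBP.
Qed.

Lemma Yn_quotient_selfnorm (M A : {group gT}) :
  M <| G -> M \subset A -> A \subset G -> ~~ abelian A ->
  'N_(G / M)(A / M) \subset A / M.
Proof. by move=> nsMG sMA sAG nabA; rewrite quotient_selfnorm ?YG. Qed.

Lemma Yn_nonsolvable_perfect : ~~ solvable G -> G \subset G^`(1).
Proof.
move=> nsolG; have [-> // | neG'G] := eqVneq G^`(1) G.
have prG'G : G^`(1) \proper G by rewrite properEneq neG'G der_sub.
have abG' := Yn_proper_normal_abelian (der_normal 1 G) prG'G.
by rewrite (series_sol (der_normal 1 G)) !abelian_sol ?sub_der1_abelian in nsolG.
Qed.

Hypothesis perfG : G \subset G^`(1).

(* For [z] of prime order [p] in 'Z(G) and [S] a Sylow p-subgroup through [z],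
   transfer puts [z] in S'; as [S] is a minimal nonabelian p-group, S' = <[z]>
   is central. Then S / 'Z(G) is an abelian self-normalising Sylow subgroup of
   the perfect group G / 'Z(G), hence trivial, forcing [S] to be abelian. *)
Lemma Yn_perfect_center_trivial : 'Z(G) = 1.
Proof.
apply/eqP/negPn/negP=> ntZ.
have lt1Z : 1 < #|'Z(G)| by rewrite ltnNge -trivg_card_le1.
have pr_p := pdiv_prime lt1Z; set p := pdiv _ in pr_p.
have [z Zz oz] := Cauchy pr_p (pdiv_dvd _).
have /centerP[Gz cGz] := Zz; have {}cGz : z \in 'C(G) by apply/centP.
have pz : p.-elt z by rewrite /p_elt oz pnat_id.
have szG : <[z]> \subset G by rewrite cycle_subG.
have [S sylS] := Sylow_superset szG pz; rewrite cycle_subG => Sz.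
have [sSG pS _] := and3P sylS.
have S'z := central_der1_mem_Sylow_der1 sylS Sz cGz (subsetP perfG z Gz) pz.
have nabS : ~~ abelian S.
  apply: contraL S'z => /derG1P ->; apply/set1P=> z1.
  by rewrite z1 order1 in oz; rewrite -oz in pr_p.
have properS_abelian := Yn_nilpotent_proper_abelian sSG (pgroup_nil pS).
have defS' : S^`(1) = <[z]>.
  apply/eqP; rewrite eq_sym eqEcard cycle_subG S'z -orderE oz.
  apply: dvdn_leq (prime_gt0 pr_p) _.
  exact: proper_abelian_pgroup_der1_dvdp pS nabS properS_abelian.
have sS'Z : S^`(1) \subset 'Z(G) by rewrite defS' cycle_subG.
have nZS := subset_trans sSG (normal_norm (center_normal G)).
have sZSG : 'Z(G) <*> S \subset G by rewrite join_subG center_sub.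
have nabZS : ~~ abelian ('Z(G) <*> S).
  by apply: contra nabS; apply/abelianS/joing_subr.
have := Yn_quotient_selfnorm (center_normal G) (joing_subl _ _) sZSG nabZS.
rewrite quotientYidl // => nSZ.
have := perfect_selfnorm_abelian_Sylow_trivial (quotient_pHall nZS sylS).
move/(_ (sub_der1_abelian sS'Z) nSZ (quotient_perfect (center_normal G) perfG)).
move/eqP; rewrite -subG1 quotient_sub1 // => sSZ.
by case/negP: nabS; apply: abelianS sSZ (center_abelian G).
Qed.

(* If 'C_G(N) < G, it is an abelian normal subgroup; for [y] mapping to an
   element of prime order of G / 'C_G(N), the nonabelian group 'C_G(N) <*> <[y]>
   is self-normalising, so <[y]> maps onto an abelian self-normalising Sylow
   subgroup of the perfect group G / 'C_G(N), which must be trivial. *)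
Lemma Yn_perfect_abelian_normal_central (N : {group gT}) :
  N <| G -> abelian N -> N \subset 'Z(G).
Proof.
move=> nsNG abN; set M := 'C_G(N).
have nsMG : M <| G.
  apply: norm_normalI; apply: subset_trans (normal_norm nsNG) _.
  exact: normal_norm (cent_normal N).
have nMG := normal_norm nsMG.
have sNM : N \subset M by rewrite subsetI normal_sub.
have [defM | neMG] := eqVneq M G.
  by rewrite subsetI normal_sub // centsC -defM subsetIr.
have abM : abelian M.
  by apply: Yn_proper_normal_abelian nsMG _; rewrite properEneq neMG subsetIl.
have ntGM : G / M != 1.
  apply: contra neMG => /eqP GM1.
  by rewrite eqEsubset subsetIl /= -(quotient_sub1 nMG) GM1.
have lt1GM : 1 < #|G / M| by rewrite ltnNge -trivg_card_le1.
have pr_p := pdiv_prime lt1GM; set p := pdiv _ in pr_p.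
have [_ /morphimP[y Ny Gy ->] oy] := Cauchy pr_p (pdiv_dvd _).
have notMy : y \notin M.
  by apply: contraL pr_p => My; rewrite -oy /= coset_id // order1.
have sMyG : M <*> <[y]> \subset G by rewrite join_subG normal_sub // cycle_subG.
have nabMy : ~~ abelian (M <*> <[y]>).
  apply: contra notMy; rewrite abelianY cycle_abelian abM /= cycle_subG => cMy.
  by rewrite inE Gy (subsetP (centS sNM) y cMy).
have := Yn_quotient_selfnorm nsMG (joing_subl _ _) sMyG nabMy.
rewrite quotientYidl ?cycle_subG // quotient_cycle // => nYY.
have pY : p.-group <[coset M y]> by rewrite /pgroup -orderE oy pnat_id.
have sYGM : <[coset M y]> \subset G / M by rewrite cycle_subG mem_quotient.
have [P sylP sYP] := Sylow_superset sYGM pY.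
have [nilP sPGM] := (pgroup_nil (pHall_pgroup sylP), pHall_sub sylP).
rewrite -(nilpotent_selfnorm_eq nilP sYP sPGM nYY) in sylP.
have := perfect_selfnorm_abelian_Sylow_trivial sylP (cycle_abelian _) nYY.
move/(_ (quotient_perfect nsMG perfG))/eqP; rewrite cycle_eq1 => /eqP Y1.
by move: pr_p; rewrite -oy /= Y1 order1.
Qed.

End ClassYn.

Theorem theorem2p14 (gT : finGroupType) (G : {group gT}) :
  in_Yn G -> solvable G \/ simple G.
Proof.
move=> YG; have [solG | nsolG] := boolP (solvable G); [by left | right].
have perfG := Yn_nonsolvable_perfect YG nsolG.
apply/simpleP; split=> [|N nsNG].
  by apply: contraNneq nsolG => ->; apply: solvable1.
have [-> | ntN] := eqsVneq N 1; [by left | right].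
apply/eqP; rewrite eqEsubset normal_sub //=; apply: contraR ntN => notsGN.
have prNG : N \proper G by rewrite properE normal_sub.
have abN := Yn_proper_normal_abelian YG nsNG prNG.
have := Yn_perfect_abelian_normal_central YG perfG nsNG abN.
by rewrite -subG1 (Yn_perfect_center_trivial YG perfG).
Qed.
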